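(* Let $d\ge1$, let $H,A\subset\mathbb{R}^d$ be nonempty, let $R>0$ and $\Delta$ be reals with $d(H,A)\ge R\ge\Delta\ge0$, and let $0\le s\le d$. Then $$\mathcal{H}^s(T_\Delta A)\ge\left(\frac{R-\Delta}{R}\right)^s\mathcal{H}^s(A),$$ with the convention $0^0:=0$ (relevant when $s=0$ and $R=\Delta$).
   Context: $\mathcal{H}^s$ denotes the $s$-dimensional outer Hausdorff measure on $\mathbb{R}^d$. $d(\cdot,\cdot)$ is Euclidean distance, $d(x,H)=\inf_{z\in H}|x-z|$ and $d(H,A)=\inf_{x\in A}d(x,H)$. Let $\bar H$ be the closure of $H$; for each $x$ let $\pi(x)\in\bar H$ be a point with $|x-\pi(x)|=d(x,H)$ (any one if several). For $\Delta\ge0$, $T_\Delta x:=x+\Delta\frac{\pi(x)-x}{|\pi(x)-x|}$ if $d(x,H)>\Delta$ and $T_\Delta x:=\pi(x)$ if $d(x,H)\le\Delta$. *)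

From HB Require Import structures.
From mathcomp Require Import all_boot all_order all_algebra.
From mathcomp Require Import all_classical all_reals all_analysis.
Set Implicit Arguments. Unset Strict Implicit. Unset Printing Implicit Defensive.
Import Order.TTheory GRing.Theory Num.Theory.
Local Open Scope classical_set_scope.
Local Open Scope ring_scope.

Section Defs.
Variables (R : realType) (d : nat).
Notation V := 'rV[R]_d.

(* Euclidean norm and distance on R^d (the library's norm on 'rV is the sup norm). *)
Definition enorm (x : V) : R := Num.sqrt (\sum_(i < d) (x ord0 i) ^+ 2).
Definition edist (x y : V) : R := enorm (x - y).

Definition dist_pt (x : V) (H : set V) : R := inf [set edist x z | z in H].
Definition dist_set (H A : set V) : R := inf [set dist_pt x H | x in A].

Definition in_eclosure (H : set V) (y : V) : Prop :=
  forall e : R, 0 < e -> exists2 z, H z & edist y z < e.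

Definition nearest_map (H : set V) (pi : V -> V) : Prop :=
  forall x, in_eclosure H (pi x) /\ edist x (pi x) = dist_pt x H.

Definition Tmap (H : set V) (pi : V -> V) (Delta : R) (x : V) : V :=
  if Delta < dist_pt x H then x + (Delta / edist (pi x) x) *: (pi x - x)
  else pi x.

(* Euclidean diameter (extended real; -oo for the empty set) *)
Definition ediam (U : set V) : \bar R :=
  ereal_sup [set (edist p.1 p.2)%:E | p in U `*` U].

(* diam(U)^s, with diam(empty)^s = 0 and, for nonempty U, 0^0 = 1 (powR) *)
Definition hterm (s : R) (U : set V) : \bar R :=
  match ediam U with
  | EFin r => (r `^ s)%:E
  | +oo%E => +oo%E
  | -oo%E => 0%E
  end.

Definition hausdorff_pre (s delta : R) (E : set V) : \bar R :=
  ereal_inf [set (\sum_(0 <= i <oo) hterm s (U i))%E | U in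
     [set U : nat -> set V | E `<=` \bigcup_i U i /\
                              forall i, (ediam (U i) <= delta%:E)%E]].

(* H^s(E) = lim_{delta -> 0+} H^s_delta(E) = sup_{delta > 0} H^s_delta(E) *)
Definition hausdorff (s : R) (E : set V) : \bar R :=
  ereal_sup [set hausdorff_pre s delta E | delta in [set delta : R | 0 < delta]].

End Defs.

Definition shrink_factor (R : realType) (r Delta s : R) : R :=
  if r - Delta == 0 then 0 else ((r - Delta) / r) `^ s.

(* Let x, y be in A and put a = pi x - x, b = pi y - y, w = y - x, so that
   |a| = d(x,H) >= R and |b| = d(y,H) >= R.  Since pi y lies in the closure
   of H it is no closer to x than pi x, i.e. |w + b| >= |a|; symmetrically
   |a - w| >= |b|.  Expanding both squares and using |a|, |b| >= R gives
   <a,w>/|a| - <b,w>/|b| <= |w|^2/R, hence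
   <T y - T x, w> >= (1 - Delta/R) |w|^2 and, by Cauchy-Schwarz, T_Delta
   expands distances on A by at least c = (R - Delta)/R.  Such a map pulls a
   (c delta)-cover of T(A) back to a delta-cover of A whose pieces have
   diameters at most 1/c times larger, so c^s H^s(A) <= H^s(T(A)). *)

From Pilot Require Import Defs.
From HB Require Import structures.
From mathcomp Require Import all_boot all_order all_algebra.
From mathcomp Require Import all_classical all_reals all_analysis.
From mathcomp Require Import ring lra.
Set Implicit Arguments. Unset Strict Implicit. Unset Printing Implicit Defensive.
Import Order.TTheory GRing.Theory Num.Theory.
Local Open Scope classical_set_scope.
Local Open Scope ring_scope.

Lemma nearest_points_cross_bound (R : realFieldType) (r Dx Dy W P Q : R) :
  0 < r -> r <= Dx -> r <= Dy -> 0 <= W ->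
  2 * P <= W + Dx ^+ 2 - Dy ^+ 2 -> - (2 * Q) <= W + Dy ^+ 2 - Dx ^+ 2 ->
  P / Dx - Q / Dy <= W / r.
Proof.
move=> r0 rDx rDy W0 hP hQ.
have Dx0 : 0 < Dx by exact: lt_le_trans rDx.
have Dy0 : 0 < Dy by exact: lt_le_trans rDy.
have -> : P / Dx - Q / Dy = (Dy * P - Dx * Q) / (Dx * Dy).
  by field; rewrite ?gt_eqF.
rewrite ler_pdivrMr ?mulr_gt0 // mulrAC ler_pdivlMr //.
have hP' : 2 * (r * Dy * P) <= r * Dy * (W + Dx ^+ 2 - Dy ^+ 2).
  by rewrite mulrCA ler_pM2l ?mulr_gt0.
have hQ' : - (2 * (r * Dx * Q)) <= r * Dx * (W + Dy ^+ 2 - Dx ^+ 2).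
  by rewrite mulrCA -mulrN ler_pM2l ?mulr_gt0.
have hW : r * (Dx + Dy) * W <= 2 * (Dx * Dy) * W.
  by apply: ler_wpM2r => //; nra.
have hsq : 0 <= r * (Dx + Dy) * (Dx - Dy) ^+ 2.
  by rewrite mulr_ge0 ?sqr_ge0 // mulr_ge0 ?addr_ge0 ?ltW.
nra.
Qed.

Section Euclidean.
Variables (R : realType) (d : nat).
Notation V := 'rV[R]_d.
Local Notation edist := Defs.edist.
Implicit Types u v w x y z : V.

Definition dot (u v : V) : R := \sum_(i < d) u ord0 i * v ord0 i.

Lemma dotC u v : dot u v = dot v u.
Proof. by apply: eq_bigr => i _; rewrite mulrC. Qed.
Lemma dotDl u v w : dot (u + v) w = dot u w + dot v w.
Proof. by rewrite /dot -big_split; apply: eq_bigr => i _; rewrite !mxE mulrDl. Qed.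
Lemma dotNl u w : dot (- u) w = - dot u w.
Proof. by rewrite /dot -sumrN; apply: eq_bigr => i _; rewrite !mxE mulNr. Qed.
Lemma dotZl k u w : dot (k *: u) w = k * dot u w.
Proof. by rewrite /dot mulr_sumr; apply: eq_bigr => i _; rewrite !mxE mulrA. Qed.
Lemma dotBl u v w : dot (u - v) w = dot u w - dot v w.
Proof. by rewrite dotDl dotNl. Qed.
Lemma dotDr u v w : dot w (u + v) = dot w u + dot w v.
Proof. by rewrite dotC dotDl !(dotC w). Qed.
Lemma dotNr u w : dot w (- u) = - dot w u.
Proof. by rewrite dotC dotNl dotC. Qed.
Lemma dotBr u v w : dot w (u - v) = dot w u - dot w v.
Proof. by rewrite dotDr dotNr. Qed.
Lemma dotZr k u w : dot w (k *: u) = k * dot w u.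
Proof. by rewrite dotC dotZl dotC. Qed.

Lemma dotvvD u v : dot (u + v) (u + v) = dot u u + 2 * dot u v + dot v v.
Proof. by rewrite !(dotDl, dotDr) (dotC v u); ring. Qed.

Lemma dotvvB u v : dot (u - v) (u - v) = dot u u - 2 * dot u v + dot v v.
Proof. by rewrite !(dotBl, dotBr) (dotC v u); ring. Qed.

Lemma dotvv_ge0 u : 0 <= dot u u.
Proof. by apply: sumr_ge0 => i _; rewrite -expr2 sqr_ge0. Qed.

Lemma dotvv_eq0 u : (dot u u == 0) = (u == 0).
Proof.
apply/idP/eqP => [/eqP/psumr_eq0P u0|->]; last by rewrite /dot big1 // => i _; rewrite mxE mul0r.
apply/rowP => i; rewrite mxE; apply/eqP.
by rewrite -sqrf_eq0 expr2 u0 // => j _; rewrite -expr2 sqr_ge0.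
Qed.

Lemma enormE u : enorm u = Num.sqrt (dot u u).
Proof. by congr Num.sqrt; apply: eq_bigr => i _; rewrite expr2. Qed.

Lemma enorm_ge0 u : 0 <= enorm u.
Proof. by rewrite enormE sqrtr_ge0. Qed.

Lemma enorm_sqr u : enorm u ^+ 2 = dot u u.
Proof. by rewrite enormE sqr_sqrtr // dotvv_ge0. Qed.

Lemma enormN u : enorm (- u) = enorm u.
Proof. by rewrite !enormE dotNl dotNr opprK. Qed.

Lemma cauchy_schwarz u v : dot u v <= enorm u * enorm v.
Proof.
have [->|u0] := eqVneq u 0; first by rewrite /dot big1 ?mulr_ge0 ?enorm_ge0 // => i _; rewrite mxE mul0r.
have [->|v0] := eqVneq v 0; first by rewrite /dot big1 ?mulr_ge0 ?enorm_ge0 // => i _; rewrite mxE mulr0.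
set a := enorm u; set b := enorm v.
have a0 : 0 < a by rewrite /a enormE sqrtr_gt0 lt0r dotvv_eq0 u0 dotvv_ge0.
have b0 : 0 < b by rewrite /b enormE sqrtr_gt0 lt0r dotvv_eq0 v0 dotvv_ge0.
have := dotvv_ge0 (b *: u - a *: v).
rewrite !(dotBl, dotBr, dotZl, dotZr) -!enorm_sqr -/a -/b (dotC v u) => h.
rewrite -(ler_pM2l (mulr_gt0 a0 b0)); nra.
Qed.

Lemma enormD u v : enorm (u + v) <= enorm u + enorm v.
Proof.
rewrite -ler_sqr ?nnegrE ?addr_ge0 ?enorm_ge0 // enorm_sqr.
rewrite !(dotDl, dotDr) (dotC v u) -!enorm_sqr.
have := cauchy_schwarz u v; lra.
Qed.

Lemma edistC x y : edist x y = edist y x.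
Proof. by rewrite /edist -enormN opprB. Qed.

Lemma edist_ge0 x y : 0 <= edist x y.
Proof. exact: enorm_ge0. Qed.

Lemma edist_triangle x y z : edist x z <= edist x y + edist y z.
Proof. by rewrite /edist -[x - z](subrKA y) enormD. Qed.

Lemma edistxx x : edist x x = 0.
Proof. by rewrite /edist subrr enormE (eqP (_ : dot 0 0 == 0)) ?sqrtr0 ?dotvv_eq0. Qed.

Lemma enorm_step_toward_nearest w a b (r Dl : R) :
  0 < r -> r <= enorm a -> r <= enorm b -> 0 <= Dl ->
  enorm a <= enorm (w + b) -> enorm b <= enorm (a - w) ->
  (r - Dl) / r * enorm w <= enorm (w + (Dl / enorm b) *: b - (Dl / enorm a) *: a).
Proof.
move=> r0 ra rb Dl0 a_le b_le.
have hP : 2 * dot a w <= dot w w + enorm a ^+ 2 - enorm b ^+ 2.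
  have := b_le; rewrite -ler_sqr ?nnegrE ?enorm_ge0 // [enorm (a - w) ^+ 2]enorm_sqr dotvvB.
  rewrite -[dot a a]enorm_sqr; lra.
have hQ : - (2 * dot b w) <= dot w w + enorm b ^+ 2 - enorm a ^+ 2.
  have := a_le; rewrite -ler_sqr ?nnegrE ?enorm_ge0 // [enorm (w + b) ^+ 2]enorm_sqr dotvvD.
  rewrite -[dot b b]enorm_sqr (dotC w b); lra.
have cross := nearest_points_cross_bound r0 ra rb (dotvv_ge0 w) hP hQ.
set u := w + _ - _.
have uw : (r - Dl) / r * dot w w <= dot u w.
  rewrite /u !(dotDl, dotNl, dotZl) mulrBl divff ?gt_eqF //.
  have := ler_wpM2l Dl0 cross; rewrite mulrBr !mulrA; lra.
have [w0|w_gt0] := eqVneq (enorm w) 0; first by rewrite w0 mulr0 enorm_ge0.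
have {}w_gt0 : 0 < enorm w by rewrite lt0r w_gt0 enorm_ge0.
rewrite -(ler_pM2r w_gt0).
by have := le_trans uw (cauchy_schwarz u w); rewrite -enorm_sqr expr2 mulrA.
Qed.

Lemma dist_pt_ge0 (H : set V) x : H !=set0 -> 0 <= dist_pt x H.
Proof.
move=> [z Hz]; apply: lb_le_inf; first by exists (edist x z), z.
by move=> _ [y _ <-]; exact: edist_ge0.
Qed.

Lemma dist_pt_le (H : set V) x z : H z -> dist_pt x H <= edist x z.
Proof.
move=> Hz; apply: ge_inf; last by exists z.
by exists 0 => _ [y _ <-]; exact: edist_ge0.
Qed.

Lemma dist_pt_le_eclosure (H : set V) x p : in_eclosure H p -> dist_pt x H <= edist x p.
Proof.
move=> Hp; apply/ler_addgt0Pr => e e0.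
have [z Hz pz] := Hp e e0.
apply: le_trans (dist_pt_le x Hz) _.
by apply: le_trans (edist_triangle x p z) _; rewrite lerD2l ltW.
Qed.

Lemma dist_set_le (H A : set V) x : H !=set0 -> A x -> dist_set H A <= dist_pt x H.
Proof.
move=> H0 Ax; apply: ge_inf; last by exists x.
by exists 0 => _ [y _ <-]; exact: dist_pt_ge0.
Qed.

Lemma TmapE (H : set V) pi Dl x : nearest_map H pi ->
  0 < dist_pt x H -> Dl <= dist_pt x H ->
  Tmap H pi Dl x = x + (Dl / dist_pt x H) *: (pi x - x).
Proof.
move=> hpi Dx0 DlDx; have [_ epi] := hpi x.
rewrite /Tmap edistC epi; case: ltP => // DxDl.
have -> : Dl = dist_pt x H by apply/le_anti; rewrite DlDx DxDl.
by rewrite divff ?gt_eqF // scale1r addrC subrK.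
Qed.

Definition lower_lipschitz (c : R) (f : V -> V) (A : set V) :=
  forall x y, A x -> A y -> c * edist x y <= edist (f x) (f y).

Lemma Tmap_lower_lipschitz (H A : set V) pi (r Dl : R) :
  H !=set0 -> nearest_map H pi -> 0 < r -> r <= dist_set H A -> 0 <= Dl -> Dl <= r ->
  lower_lipschitz ((r - Dl) / r) (Tmap H pi Dl) A.
Proof.
move=> H0 hpi r0 rA Dl0 Dlr x y Ax Ay.
have rx : r <= dist_pt x H := le_trans rA (dist_set_le H0 Ax).
have ry : r <= dist_pt y H := le_trans rA (dist_set_le H0 Ay).
have [pix ex] := hpi x; have [piy ey] := hpi y.
have ea : enorm (pi x - x) = dist_pt x H by rewrite -ex edistC.
have eb : enorm (pi y - y) = dist_pt y H by rewrite -ey edistC.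
have step := @enorm_step_toward_nearest (y - x) (pi x - x) (pi y - y) r Dl.
rewrite ea eb in step.
rewrite !TmapE ?(lt_le_trans r0) ?(le_trans Dlr) // [edist (x + _) _]edistC [edist x y]edistC /edist.
rewrite [y + _ - _](_ : _ = y - x + (Dl / dist_pt y H) *: (pi y - y) - (Dl / dist_pt x H) *: (pi x - x)).
  apply: step => //.
    rewrite addrC addrA subrK -[enorm _]/(edist (pi y) x) edistC.
    exact: dist_pt_le_eclosure.
  rewrite opprB addrA subrK -[enorm _]/(edist (pi x) y) edistC.
  exact: dist_pt_le_eclosure.
by rewrite opprD addrACA addrA.
Qed.

End Euclidean.

Section Hausdorff.
Variables (R : realType) (d : nat).
Notation V := 'rV[R]_d.
Local Notation edist := Defs.edist.
Local Open Scope ereal_scope.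

Lemma hterm_ge0 (s : R) (U : set V) : 0 <= hterm s U.
Proof. by rewrite /hterm; case: (ediam U) => [r| |] //; rewrite lee_fin powR_ge0. Qed.

Lemma ediam_fin_ge0 (U : set V) (r : R) : ediam U = r%:E -> (0 <= r)%R.
Proof.
have [[x Ux] eU|U0] := pselect (U !=set0).
  rewrite -lee_fin -eU; apply: ereal_sup_ubound.
  by exists (x, x) => //=; rewrite edistxx.
suff -> : ediam U = -oo by [].
rewrite /ediam (_ : [set _ | p in U `*` U] = set0) ?ereal_sup0 //.
by apply/seteqP; split=> // _ [[p q] [/= Up _] _]; apply: U0; exists p.
Qed.

Lemma ediam_lower_lipschitz (f : V -> V) (U W : set V) (c : R) : (0 < c)%R ->
  (forall x, W x -> U (f x)) -> lower_lipschitz c f W ->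
  ediam W <= ediam U * (c^-1)%:E.
Proof.
move=> c0 fWU fc; apply: ge_ereal_sup => _ [[x y] [/= Wx Wy] <-].
rewrite lee_pdivlMr // -EFinM.
apply: le_trans (_ : (edist (f x) (f y))%:E <= _); first by rewrite lee_fin mulrC fc.
by apply: ereal_sup_ubound; exists (f x, f y) => //; split; apply: fWU.
Qed.

Lemma hterm_lower_lipschitz (f : V -> V) (U W : set V) (c s : R) :
  (0 < c)%R -> (0 <= s)%R -> (forall x, W x -> U (f x)) -> lower_lipschitz c f W ->
  (c `^ s)%:E * hterm s W <= hterm s U.
Proof.
move=> c0 s0 fWU fc; have := ediam_lower_lipschitz c0 fWU fc.
have cNy : -oo * (c^-1)%:E = -oo by rewrite gt0_mulNye // lte_fin invr_gt0.
rewrite /hterm; case eW: (ediam W) => [rW| |]; last by rewrite mule0 hterm_ge0.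
- case eU: (ediam U) => [rU| |]; [|by rewrite leey|by rewrite cNy].
  rewrite -EFinM !lee_fin ler_pdivlMr // mulrC => crW.
  have [rW0 rU0] := (ediam_fin_ge0 eW, ediam_fin_ge0 eU).
  rewrite -powRM ?(ltW c0) // ge0_ler_powR // nnegrE.
  by rewrite mulr_ge0 ?(ltW c0).
- case: (ediam U) => [rU| |]; [by rewrite -EFinM leye_eq|by rewrite leey|by rewrite cNy].
Qed.

Lemma hausdorff_pre_lower_lipschitz (f : V -> V) (A : set V) (c s delta : R) :
  (0 < c)%R -> (0 <= s)%R -> lower_lipschitz c f A ->
  (c `^ s)%:E * hausdorff_pre s delta A <= hausdorff_pre s (c * delta) (f @` A).
Proof.
move=> c0 s0 fc; have cs0 : 0 <= (c `^ s)%:E by rewrite lee_fin powR_ge0.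
apply: le_ereal_inf_tmp => _ [U [AU Udiam] <-].
pose W i := A `&` f @^-1` U i.
have fWU i : forall x, W i x -> U i (f x) by move=> x [].
have fcW i : lower_lipschitz c f (W i) by move=> x y [Ax _] [Ay _]; apply: fc.
apply: le_trans (_ : _ <= (c `^ s)%:E * \sum_(0 <= i <oo) hterm s (W i)) _.
  apply: lee_wpmul2l => //; apply: ereal_inf_lbound; exists W => //; split.
    move=> x Ax; have [i _ Ui] := AU (f x) (ex_intro2 _ _ x Ax erefl).
    by exists i.
  move=> i; apply: le_trans (ediam_lower_lipschitz c0 (fWU i) (fcW i)) _.
  rewrite (_ : delta%:E = (c * delta)%:E * (c^-1)%:E); last first.
    by rewrite -EFinM mulrAC divff ?gt_eqF // mul1r.
  by apply: lee_wpmul2r => //; rewrite lee_fin invr_ge0 ltW.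
rewrite -nneseriesZl; last by move=> i _; exact: hterm_ge0.
apply: lee_nneseries; first by move=> i _ _; rewrite mule_ge0 // hterm_ge0.
by move=> i _; exact: hterm_lower_lipschitz c0 s0 (fWU i) (fcW i).
Qed.

Lemma hausdorff_lower_lipschitz (f : V -> V) (A : set V) (c s : R) :
  (0 < c)%R -> (0 <= s)%R -> lower_lipschitz c f A ->
  (c `^ s)%:E * hausdorff s A <= hausdorff s (f @` A).
Proof.
move=> c0 s0 fc; have cs0 : (0 < c `^ s)%R by rewrite powR_gt0.
rewrite -lee_pdivlMl //; apply: ge_ereal_sup => _ [delta delta0 <-].
rewrite lee_pdivlMl //; apply: le_trans (hausdorff_pre_lower_lipschitz delta c0 s0 fc) _.
by apply: ereal_sup_ubound; exists (c * delta)%R => //=; rewrite mulr_gt0.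
Qed.

Lemma hausdorff_ge0 (s : R) (E : set V) : 0 <= hausdorff s E.
Proof.
apply: le_trans (_ : hausdorff_pre s 1 E <= _); last first.
  by apply: ereal_sup_ubound; exists 1%R => //=; rewrite ltr01.
apply: le_ereal_inf_tmp => _ [U _ <-].
by apply: nneseries_ge0 => i _ _; exact: hterm_ge0.
Qed.

End Hausdorff.

Theorem proposition2 (R : realType) (d : nat) (H A : set 'rV[R]_d)
  (pi : 'rV[R]_d -> 'rV[R]_d) (r Delta s : R) :
  (1 <= d)%N -> H !=set0 -> A !=set0 -> nearest_map H pi ->
  0 < r -> r <= dist_set H A -> 0 <= Delta -> Delta <= r ->
  0 <= s -> s <= d%:R ->
  ((shrink_factor r Delta s)%:E * hausdorff s A <= hausdorff s (Tmap H pi Delta @` A))%E.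
Proof.
move=> _ H0 _ hpi r0 rA Delta0 Delta_r s0 _.
rewrite /shrink_factor; case: eqP => [_|rDelta]; first by rewrite mul0e hausdorff_ge0.
have c0 : 0 < (r - Delta) / r by rewrite divr_gt0 // lt0r subr_ge0 Delta_r andbT; apply/eqP.
exact/hausdorff_lower_lipschitz/Tmap_lower_lipschitz.
Qed.
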